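(* Let $2\leq d\leq k$ be integers, $\Sigma_k=\{\sigma_1,\ldots,\sigma_k\}$, $\Sigma_d=\{\sigma_1,\ldots,\sigma_d\}$, $n\geq 1$, and let $\mathcal{G}\subseteq\Sigma_k^n$. Put $\mathcal{G}'=\mathcal{G}\cap\Sigma_d^n$. Suppose $\mathcal{G}$ is closed under replacing $\sigma_i$ by $\sigma_j$ for any $i>d$ and $j\in[k]$, i.e. whenever $g\in\mathcal{G}$ has the letter $\sigma_i$ with $i>d$ in some coordinate, the word obtained from $g$ by changing that coordinate to any letter $\sigma_j$, $j\in[k]$, also lies in $\mathcal{G}$. Then either $|\mathcal{G}|=|\mathcal{G}'|=0$ or $\log_k|\mathcal{G}|\leq\log_d|\mathcal{G}'|$. *)

From mathcomp Require Import all_boot.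
From Stdlib Require Import Reals.
Set Implicit Arguments. Unset Strict Implicit. Unset Printing Implicit Defensive.

(* Letters sigma_1..sigma_k are encoded as 'I_k = {0,..,k-1} (sigma_{i+1} <-> i).
   Words of length n over Sigma_k are {ffun 'I_n -> 'I_k}. *)
Definition word (n k : nat) := {ffun 'I_n -> 'I_k}.

Definition upd (n k : nat) (g : word n k) (i : 'I_n) (j : 'I_k) : word n k :=
  [ffun t => if t == i then j else g t].

Definition restr (n k d : nat) (G : {set word n k}) : {set word n k} :=
  [set g in G | [forall t, (g t < d)%N]].

(* closure: any coordinate carrying a letter sigma_i with i > d (i.e. index >= d)
   may be changed to any letter of Sigma_k *)
Definition closed_high (n k d : nat) (G : {set word n k}) : Prop :=
  forall g, g \in G -> forall i : 'I_n, (d <= g i)%N ->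
    forall j : 'I_k, upd g i j \in G.

Definition logb (b x : R) : R := Rdiv (ln x) (ln b).

(* Put b = ln k / ln d >= 1, so that d ^ b = k; we show |G| <= |G'| ^ b by
   induction on the number of coordinates at which some word of G is not the
   letter sigma_1.  Pick such a coordinate i, split G according to the letter
   at i, and reset coordinate i to sigma_1 in each part: this gives smaller
   closed families, whose restrictions count the corresponding parts of G'.
   The induction hypothesis bounds the parts for the letters sigma_1..sigma_d,
   and closure makes each part for a later letter no larger than the part for
   any other letter, in particular the one whose restricted count m is least.
   It remains to see that y_1^b + ... + y_d^b + (k - d) m^b <= (y_1 + ... + y_d)^b
   when all y_j >= m, which follows from the convexity of x^b and d^b = k. *)

From HB Require Import structures.
From mathcomp Require Import all_boot.
From Stdlib Require Import Reals Lra.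
From Coquelicot Require Derive Rbar.
Set Implicit Arguments. Unset Strict Implicit. Unset Printing Implicit Defensive.

HB.instance Definition _ := Monoid.isComLaw.Build R 0%R Rplus
  (fun x y z => esym (Rplus_assoc x y z)) Rplus_comm Rplus_0_l.

Local Notation "\rsum_ ( i <- r ) F" := (\big[Rplus/0%R]_(i <- r) F)
  (at level 41, F at level 41, i, r at level 50).

Lemma INR_sum (I : Type) (r : seq I) (f : I -> nat) :
  INR (\sum_(i <- r) f i) = \rsum_(i <- r) INR (f i).
Proof. exact: (big_morph INR plus_INR (erefl (INR 0))). Qed.

Lemma Rle_sum (I : eqType) (r : seq I) (F G : I -> R) :
  {in r, forall i, (F i <= G i)%R} -> (\rsum_(i <- r) F i <= \rsum_(i <- r) G i)%R.
Proof.
elim: r => [|a r IH] FG; rewrite ?big_nil ?big_cons; first lra.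
apply: Rplus_le_compat; first exact/FG/mem_head.
by apply: IH => i ri; apply/FG; rewrite inE ri orbT.
Qed.

Lemma rsum_const (I : Type) (r : seq I) (c : R) :
  \rsum_(i <- r) c = (INR (size r) * c)%R.
Proof.
elim: r => [|a r IH]; first by rewrite big_nil /=; ring.
rewrite big_cons IH; change (size (a :: r)) with (size r).+1; rewrite S_INR; ring.
Qed.

Lemma rsum_ge_const (I : eqType) (r : seq I) (F : I -> R) (m : R) :
  {in r, forall i, (m <= F i)%R} -> (INR (size r) * m <= \rsum_(i <- r) F i)%R.
Proof. by rewrite -rsum_const; exact: Rle_sum. Qed.

(* [Rpower 0 b = exp (b * ln 0) = 1]; [rpow b] is instead the continuous
   extension of [x |-> x ^ b] by [0] on [x <= 0]. *)
Definition rpow (b x : R) : R := if Rlt_dec 0 x then Rpower x b else 0%R.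

Lemma rpow_pos b x : (0 < x)%R -> rpow b x = Rpower x b.
Proof. by rewrite /rpow; case: Rlt_dec. Qed.

Lemma rpow_nonpos b x : (x <= 0)%R -> rpow b x = 0%R.
Proof. by rewrite /rpow; case: Rlt_dec => // ?; lra. Qed.

Lemma rpow_scale b a x : (0 < a)%R -> rpow b (a * x) = (Rpower a b * rpow b x)%R.
Proof.
move=> a0; case: (Rlt_le_dec 0 x) => x0.
  by rewrite !rpow_pos ?Rpower_mult_distr //; apply: Rmult_lt_0_compat.
rewrite !rpow_nonpos ?Rmult_0_r //.
by rewrite -(Rmult_0_r a); apply: Rmult_le_compat_l; lra.
Qed.

Lemma Rpower_superadditive b x y : (1 <= b)%R -> (0 < x)%R -> (0 < y)%R ->
  (Rpower x b + Rpower y b <= Rpower (x + y) b)%R.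
Proof.
move=> b1 x0 y0.
have split_one u : (0 < u)%R -> Rpower u b = (Rpower u (b - 1) * u)%R.
  by move=> u0; rewrite -[X in (_ * X)%R](Rpower_1 u) // -Rpower_plus; congr Rpower; ring.
rewrite !split_one; try lra.
have := Rle_Rpower_l x (x + y) (b - 1) ltac:(lra) ltac:(lra).
have := Rle_Rpower_l y (x + y) (b - 1) ltac:(lra) ltac:(lra).
nra.
Qed.

Lemma Rpower_increment_lt b c s t : (1 < b)%R -> (0 < c)%R -> (0 < s)%R -> (s < t)%R ->
  (Rpower (s + c) b - Rpower s b < Rpower (t + c) b - Rpower t b)%R.
Proof.
move=> b1 c0 s0 st.
apply: (Derive.incr_function (fun x => Rpower (x + c) b - Rpower x b)%R
  (Rbar.Finite 0) Rbar.p_infty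
  (fun x => b * Rpower (x + c) (b - 1) * 1 - b * Rpower x (b - 1))%R) => //=.
- move=> x x0 _; apply/Derive.is_derive_Reals/derivable_pt_lim_minus.
  + apply: (derivable_pt_lim_comp (fun x => x + c)%R (fun y => Rpower y b)).
    * rewrite -(Rplus_0_r 1); apply: derivable_pt_lim_plus.
        exact: derivable_pt_lim_id.
      exact: derivable_pt_lim_const.
    * apply: derivable_pt_lim_power; lra.
  + apply: derivable_pt_lim_power; lra.
- move=> x x0 _.
  have := Rlt_Rpower_l x (x + c) (b - 1) ltac:(lra) ltac:(lra).
  nra.
Qed.

Lemma rpow_increment_le b c s t : (1 <= b)%R -> (0 <= c)%R -> (0 <= s)%R -> (s <= t)%R ->
  (rpow b (s + c) - rpow b s <= rpow b (t + c) - rpow b t)%R.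
Proof.
move=> b1 c0 s0 st.
case: (Req_dec c 0) => [->|c_neq0]; first by rewrite !Rplus_0_r; lra.
case: (Req_dec s t) => [->|s_neq_t]; first lra.
case: (Req_dec s 0) => [->|s_neq0].
  rewrite Rplus_0_l (rpow_nonpos b (Rle_refl 0)) !rpow_pos; try lra.
  have := @Rpower_superadditive b t c b1 ltac:(lra) ltac:(lra); lra.
rewrite !rpow_pos; try lra.
case: (Req_dec b 1) => [->|b_neq1]; first by rewrite !Rpower_1; lra.
by left; apply: Rpower_increment_lt; lra.
Qed.

Lemma sum_rpow_defect_le (I : eqType) b m (r : seq I) (F : I -> R) :
  (1 <= b)%R -> (0 <= m)%R -> {in r, forall i, (m <= F i)%R} ->
  (rpow b (INR (size r) * m) - INR (size r) * rpow b m <=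
   rpow b (\rsum_(i <- r) F i) - \rsum_(i <- r) rpow b (F i))%R.
Proof.
move=> b1 m0; elim: r => [|a r IH] mF.
  by rewrite !big_nil /= Rmult_0_l; lra.
have mFr : {in r, forall i, (m <= F i)%R}.
  by move=> i ri; apply/mF; rewrite inE ri orbT.
have ma : (m <= F a)%R by apply/mF/mem_head.
have rm : (0 <= INR (size r) * m)%R by apply: Rmult_le_pos; first exact: pos_INR.
have rS := rsum_ge_const mFr.
(* Move the new summand from [m] to [F a] in two convexity steps: first the
   increment by [m] is taken at the sum instead of at [size r * m], then the
   increment by the sum is taken at [F a] instead of at [m]. *)
have incr_by_m := rpow_increment_le b1 m0 rm rS.
have incr_by_sum := rpow_increment_le b1 (Rle_trans _ _ _ rm rS) m0 ma.
have := IH mFr.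
rewrite !big_cons; change (size (a :: r)) with (size r).+1.
rewrite S_INR Rmult_plus_distr_r Rmult_1_l.
rewrite [(m + _)%R]Rplus_comm in incr_by_sum.
lra.
Qed.

Lemma sum_rpow_le (I : eqType) b m (r : seq I) (F : I -> R) :
  (1 <= b)%R -> (0 <= m)%R -> (0 < size r)%N -> {in r, forall i, (m <= F i)%R} ->
  (\rsum_(i <- r) rpow b (F i) + (Rpower (INR (size r)) b - INR (size r)) * rpow b m <=
   rpow b (\rsum_(i <- r) F i))%R.
Proof.
move=> b1 m0 r0 mF; have := sum_rpow_defect_le b1 m0 mF.
rewrite rpow_scale; first lra.
by apply: lt_0_INR; apply/ltP.
Qed.

Section Compression.
Variables (n k d : nat) (z : 'I_k).
Implicit Types (G : {set word n k}) (g : word n k) (i : 'I_n).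

Definition active G := [set t : 'I_n | [exists g in G, g t != z]].

Definition fibre G i (b : nat) := [set g in G | g i == b :> nat].

Definition compress G i b := [set upd g i z | g in fibre G i b].

Lemma updE g i j t : upd g i j t = if t == i then j else g t.
Proof. by rewrite ffunE. Qed.

Lemma card_fibres G i : #|G| = \sum_(0 <= b < k) #|fibre G i b|.
Proof.
rewrite big_mkord -sum1_card (partition_big (fun g => g i) xpredT) //=.
by apply: eq_bigr => b _; rewrite -sum1_card; apply: eq_bigl => g; rewrite inE.
Qed.

Lemma card_compress G i b : #|compress G i b| = #|fibre G i b|.
Proof.
apply: card_in_imset => g1 g2; rewrite !inE => /andP [_ /eqP g1i] /andP [_ /eqP g2i] E.
apply/ffunP => t; have := congr1 (fun w : word n k => w t) E; rewrite !updE.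
by case: eqP => [-> _|//]; apply: val_inj; rewrite /= g1i g2i.
Qed.

Lemma compress_high_subset G i b c : closed_high d G -> (d <= b)%N -> (c < k)%N ->
  compress G i b \subset compress G i c.
Proof.
move=> clG db ck; apply/subsetP => w /imsetP [g]; rewrite inE => /andP [gG /eqP gi] ->.
apply/imsetP; exists (upd g i (Ordinal ck)); first by rewrite inE clG ?gi // updE eqxx /=.
by apply/ffunP => t; rewrite !updE; case: eqP.
Qed.

Lemma active_compress_proper G i b g0 : g0 \in G -> g0 i != z ->
  active (compress G i b) \proper active G.
Proof.
move=> g0G g0i; apply/properP; split.
  apply/subsetP => t; rewrite !inE => /existsP [w /andP [/imsetP [g]]].
  rewrite inE => /andP [gG _] -> /=; rewrite updE.
  case: (t =P i) => [_|_ gt]; first by rewrite eqxx.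
  by apply/existsP; exists g; rewrite gG.
exists i; first by rewrite inE; apply/existsP; exists g0; rewrite g0G.
by rewrite inE; apply/existsP => -[w /andP [/imsetP [g _ ->]]]; rewrite updE !eqxx.
Qed.

Lemma inactive_subset1 G : active G = set0 -> G \subset [set [ffun => z]].
Proof.
move=> G0; apply/subsetP => g gG; rewrite inE; apply/eqP/ffunP => t; rewrite ffunE.
apply/eqP; apply: contraFT (in_set0 t) => gt.
by rewrite -G0 inE; apply/existsP; exists g; rewrite gG.
Qed.

Lemma fibre_restr_high G i b : (d <= b)%N -> fibre (restr d G) i b = set0.
Proof.
move=> db; apply/setP => g; rewrite !inE.
by apply/negP => /andP [/andP [_ /forallP low] /eqP gi]; have := low i; rewrite gi ltnNge db.
Qed.

Hypothesis zd : (z < d)%N.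

Lemma restr_inactive G : active G = set0 -> restr d G = G.
Proof.
move=> G0; apply/setP => g; rewrite inE andb_idr // => /(subsetP (inactive_subset1 G0)).
by rewrite inE => /eqP ->; apply/forallP => t; rewrite ffunE.
Qed.

Lemma restr_compress G i b : (b < d)%N -> restr d (compress G i b) = compress (restr d G) i b.
Proof.
move=> bd; apply/setP => w; rewrite !inE; apply/andP/imsetP.
- move=> [/imsetP [g]]; rewrite inE => /andP [gG /eqP gi] -> /forallP low.
  exists g => //; rewrite !inE gG gi eqxx andbT /=; apply/forallP => t.
  by have := low t; rewrite updE; case: eqP => [->|//] _; rewrite gi.
- move=> [g]; rewrite !inE => /andP [/andP [gG /forallP low] gi] ->.
  split; first by apply/imsetP; exists g; rewrite // inE gG gi.
  by apply/forallP => t; rewrite updE; case: eqP.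
Qed.

Lemma closed_compress G i b : closed_high d G -> closed_high d (compress G i b).
Proof.
move=> clG w /imsetP [g]; rewrite inE => /andP [gG /eqP gi] -> t.
rewrite updE; have [_|ti] := eqVneq t i; first by rewrite leqNgt zd.
move=> dt j; have it : (i == t) = false by rewrite eq_sym (negbTE ti).
apply/imsetP; exists (upd g t j); first by rewrite inE clG // updE it gi eqxx.
by apply/ffunP => s; rewrite !updE; have [->|] := eqVneq s i; rewrite ?it.
Qed.

Lemma card_restr_fibres G i : (d <= k)%N ->
  #|restr d G| = \sum_(0 <= b < d) #|fibre (restr d G) i b|.
Proof.
move=> dk; rewrite (card_fibres _ i) (big_cat_nat (leq0n d) dk) /=.
rewrite [X in (_ + X)%N]big_nat [X in (_ + X)%N]big1 ?addn0 // => b /andP [db _].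
by rewrite fibre_restr_high ?cards0.
Qed.

End Compression.

Lemma sum_le_rpow_sum b (d k : nat) (x y : nat -> nat) :
  (1 <= b)%R -> (0 < d)%N -> (d <= k)%N -> Rpower (INR d) b = INR k ->
  (forall c, (c < d)%N -> (INR (x c) <= rpow b (INR (y c)))%R) ->
  (forall c c', (d <= c < k)%N -> (c' < d)%N -> (x c <= x c')%N) ->
  (INR (\sum_(0 <= c < k) x c) <= rpow b (INR (\sum_(0 <= c < d) y c)))%R.
Proof.
move=> b1 d0 dk dbk low high.
have [cmin _ ymin] := @arg_minnP _ (Ordinal d0) xpredT (fun c => y c) isT.
have y_ge_min : {in index_iota 0 d, forall c, (INR (y cmin) <= INR (y c))%R}.
  move=> c; rewrite mem_index_iota => /andP [_ cd].
  exact/le_INR/leP/(ymin (Ordinal cd)).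
have low_sum : (\rsum_(c <- index_iota 0 d) INR (x c) <=
                \rsum_(c <- index_iota 0 d) rpow b (INR (y c)))%R.
  by apply: Rle_sum => c; rewrite mem_index_iota => /andP [_ /low].
have high_sum : (\rsum_(c <- index_iota d k) INR (x c) <=
                 INR (k - d) * rpow b (INR (y cmin)))%R.
  rewrite -[k - d](size_iota d) -rsum_const; apply: Rle_sum => c.
  rewrite mem_index_iota => cdk; apply: Rle_trans (low _ (ltn_ord cmin)).
  exact/le_INR/leP/high.
have convex : (\rsum_(c <- index_iota 0 d) rpow b (INR (y c)) +
               (INR k - INR d) * rpow b (INR (y cmin)) <=
               rpow b (\rsum_(c <- index_iota 0 d) INR (y c)))%R.
  by have := sum_rpow_le b1 (pos_INR _) _ y_ge_min; rewrite size_iota subn0 dbk; apply.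
rewrite (big_cat_nat (leq0n d) dk) /= plus_INR !INR_sum.
rewrite minus_INR in high_sum; last exact/leP.
lra.
Qed.

Section CardinalityBound.
Variables (n k d : nat) (b : R).
Hypotheses (d0 : (0 < d)%N) (dk : (d <= k)%N) (b1 : (1 <= b)%R)
  (dbk : Rpower (INR d) b = INR k).

Lemma card_le_rpow_restr (G : {set word n k}) :
  closed_high d G -> (INR #|G| <= rpow b (INR #|restr d G|))%R.
Proof.
pose z : 'I_k := Ordinal (leq_trans d0 dk); have zd : (z < d)%N by [].
have [N] := ubnP #|active z G|; elim: N G => // N IH G /ltnSE actN clG.
have [G0|[i]] := set_0Vmem (active z G).
  rewrite (restr_inactive zd G0); have := subset_leq_card (inactive_subset1 G0).
  rewrite cards1; case: #|G| => [|[|//]] _ /=.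
    by rewrite rpow_nonpos; lra.
  by rewrite rpow_pos /Rpower ?ln_1 ?Rmult_0_r ?exp_0; lra.
rewrite inE => /existsP [g0 /andP [g0G g0i]].
rewrite (card_fibres G i) (card_restr_fibres _ i dk).
apply: sum_le_rpow_sum => // [c cd|c c' /andP [dc ck] c'd].
  rewrite -!(card_compress z) -restr_compress //.
  apply: IH; last by apply: closed_compress.
  exact: leq_trans (proper_card (active_compress_proper c g0G g0i)) actN.
rewrite -!(card_compress z); apply: subset_leq_card.
exact: compress_high_subset clG dc (leq_trans c'd dk).
Qed.

End CardinalityBound.

Lemma ln_le x y : (0 < x)%R -> (x <= y)%R -> (ln x <= ln y)%R.
Proof.
move=> x0 [xy|->]; last exact: Rle_refl.
by left; apply: ln_increasing.
Qed.

Lemma logb_le_of_le_Rpower d k b x y : (1 < d)%R -> (1 <= b)%R -> Rpower d b = k ->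
  (0 < x)%R -> (x <= Rpower y b)%R -> (logb k x <= logb d y)%R.
Proof.
move=> d1 b1 <- x0 xy.
have lnd : (0 < ln d)%R by rewrite -ln_1; apply: ln_increasing; lra.
have lnx : (ln x <= b * ln y)%R by rewrite -ln_Rpower; apply: ln_le.
rewrite /logb ln_Rpower.
have -> : (ln y / ln d = b * ln y / (b * ln d))%R by field; lra.
apply: Rmult_le_compat_r lnx; left; apply: Rinv_0_lt_compat; nra.
Qed.

Theorem lemma11 (n k d : nat) (G : {set word n k}) :
  (2 <= d)%N -> (d <= k)%N -> (1 <= n)%N ->
  closed_high d G ->
  (#|G| = 0%N /\ #|restr d G| = 0%N) \/
  Rle (logb (INR k) (INR #|G|)) (logb (INR d) (INR #|restr d G|)).
Proof.
move=> d2 dk _ clG.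
have d0 : (0 < d)%N by apply: leq_trans d2.
have d1 : (1 < INR d)%R by apply: (lt_INR 1); apply/ltP.
have lnd : (0 < ln (INR d))%R by rewrite -ln_1; apply: ln_increasing; lra.
have lndk : (ln (INR d) <= ln (INR k))%R by apply: ln_le; [lra | exact/le_INR/leP].
pose b := (ln (INR k) / ln (INR d))%R.
have b_lnd : (b * ln (INR d) = ln (INR k))%R by rewrite /b; field; lra.
have b1 : (1 <= b)%R by nra.
have dbk : Rpower (INR d) b = INR k.
  by rewrite /Rpower b_lnd exp_ln //; apply/lt_0_INR/ltP/(leq_trans d0 dk).
have bound := card_le_rpow_restr d0 dk b1 dbk clG.
have restr_le : (#|restr d G| <= #|G|)%N.
  by apply/subset_leq_card/subsetP => g; rewrite inE => /andP [].
have [r0|r_pos] := posnP #|restr d G|.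
  rewrite r0 rpow_nonpos in bound; last exact: Rle_refl.
  by left; split=> //; apply/eqP; rewrite -leqn0; apply/leP/INR_le.
right; rewrite rpow_pos in bound; last exact/lt_0_INR/ltP.
apply: logb_le_of_le_Rpower bound => //; apply/lt_0_INR/ltP.
exact: leq_trans restr_le.
Qed.
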